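(* Let $(A,B)$ be a Katsura pair. Then the KEP-action $(G_B,E_A)$ is contracting if and only if $\limsup_{n\to\infty}\left(\max_{\mu\in E^n_{A,\infty}}\frac{|B_\mu|}{A_\mu}\right)^{1/n}<1$.
   Context: Katsura pair: $N\in\mathbb{N}$, $A\in M_N(\mathbb{N})$ (nonnegative integers), $B\in M_N(\mathbb{Z})$ with $A_{ij}=0\Rightarrow B_{ij}=0$. Graph $E_A$: vertices $\{1,\dots,N\}$, edges $e_{i,j,m}$ ($0\le m<A_{ij}$), $r=i$, $s=j$; $B_e=B_{r(e)s(e)}$. For a path $\mu=e_{i_0,i_1,r_1}\cdots e_{i_{n-1},i_n,r_n}$, $A_\mu=\prod_tA_{i_ti_{t+1}}$, $B_\mu=\prod_tB_{i_ti_{t+1}}$. The group bundle $\mathbb{Z}\times E_A^0$ (elements $a_i^k$) acts by $a_i^k\cdot e_{i,j,m}=e_{i,j,\hat m}$, $a_i^k|_{e_{i,j,m}}=a_j^{\hat k}$ with $kB_{ij}+m=\hat kA_{ij}+\hat m$, $0\le\hat m<A_{ij}$, extended recursively to paths; $G_B$ is the faithful quotient and $(G_B,E_A)$ the KEP-action; $(G_B)_i$ its isotropy group at $i$. $E^0_{A,\infty}=\{i:(G_B)_i\text{ infinite}\}$, and $E_{A,\infty}$ is the subgraph with vertices $E^0_{A,\infty}$ and edges $\{e:s(e)\in E^0_{A,\infty},B_e\ne0\}$; $E^n_{A,\infty}$ its paths of length $n$. Contracting: there is a finite $F\subseteq G_B$ such that for every $g$ there is $n$ with $g|_\mu\in F$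 for all paths $\mu\in d(g)E_A^k$, $k\ge n$. *)

From mathcomp Require Import all_boot all_order all_algebra.
From mathcomp Require Import all_classical all_reals all_analysis.
Set Implicit Arguments. Unset Strict Implicit. Unset Printing Implicit Defensive.
Import Order.TTheory GRing.Theory Num.Theory.
Local Open Scope ring_scope.

(* Vertices of E_A are 'I_N.  A finite path
     mu = e_{i0,i1,r1} e_{i1,i2,r2} ... e_{i(n-1),in,rn}
   is represented by its range vertex i0 together with the sequence
   [:: (i1,r1); ...; (in,rn)]. *)

Section Katsura.
Variables (N : nat) (A : 'M[nat]_N) (B : 'M[int]_N).

Definition Katsura_pair : Prop :=
  forall i j : 'I_N, A i j = 0%N -> B i j = 0.

Fixpoint is_path (i : 'I_N) (p : seq ('I_N * nat)) : bool :=
  match p with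
  | [::] => true
  | (j, m) :: p' => (m < A i j)%N && is_path j p'
  end.

Definition path_src (i : 'I_N) (p : seq ('I_N * nat)) : 'I_N :=
  last i (map fst p).

(* a_i^k . mu  (kB_ij + m = khat A_ij + mhat, 0 <= mhat < A_ij) *)
Fixpoint act (k : int) (i : 'I_N) (p : seq ('I_N * nat)) : seq ('I_N * nat) :=
  match p with
  | [::] => [::]
  | (j, m) :: p' =>
      let x := k * B i j + m%:Z in
      (j, absz (x %% (A i j)%:Z)%Z) :: act (x %/ (A i j)%:Z)%Z j p'
  end.

(* a_i^k |_mu = a_{s(mu)}^{res k i mu} *)
Fixpoint res (k : int) (i : 'I_N) (p : seq ('I_N * nat)) : int :=
  match p with
  | [::] => k
  | (j, m) :: p' =>
      let x := k * B i j + m%:Z in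
      res (x %/ (A i j)%:Z)%Z j p'
  end.

(* a_i^k and a_i^k' are identified in the faithful quotient G_B *)
Definition Gequiv (i : 'I_N) (k k' : int) : Prop :=
  forall p, is_path i p -> act k i p = act k' i p.

(* (G_B)_i is infinite: infinitely many classes of a_i^k *)
Definition isotropy_infinite (i : 'I_N) : Prop :=
  forall L : seq int, exists k, forall l, l \in L -> ~ Gequiv i k l.

(* Contracting: a finite F of elements of G_B, given by representatives
   (vertex, k) standing for the class of a_vertex^k. *)
Definition contracting : Prop :=
  exists F : seq ('I_N * int),
    forall (i : 'I_N) (k : int), exists n : nat,
      forall p, is_path i p -> (n <= size p)%N ->
        exists2 f, f \in F &
          f.1 = path_src i p /\ Gequiv f.1 (res k i p) f.2.

(* mu is a path in E_{A,infty}: every edge e satisfies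
   s(e) in E^0_{A,infty} and B_e <> 0 *)
Fixpoint is_inf_path (i : 'I_N) (p : seq ('I_N * nat)) : Prop :=
  match p with
  | [::] => True
  | (j, m) :: p' =>
      [/\ (m < A i j)%N, isotropy_infinite j, B i j != 0 & is_inf_path j p']
  end.

Fixpoint A_path (i : 'I_N) (p : seq ('I_N * nat)) : nat :=
  match p with
  | [::] => 1%N
  | (j, _) :: p' => (A i j * A_path j p')%N
  end.

Fixpoint B_path (i : 'I_N) (p : seq ('I_N * nat)) : int :=
  match p with
  | [::] => 1
  | (j, _) :: p' => B i j * B_path j p'
  end.

(* max_{mu in E^n_{A,infty}} |B_mu| / A_mu  (the maximum of a finite set,
   written as its supremum; it is 0 if E^n_{A,infty} is empty) *)
Definition max_ratio (R : realType) (n : nat) : R :=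
  sup [set r : R | exists (i : 'I_N) (p : seq ('I_N * nat)),
        [/\ size p = n, is_inf_path i p &
            r = (`|B_path i p|%:~R) / (A_path i p)%:R]].

End Katsura.

(* The isotropy group (G_B)_i is a quotient of Z, so it is infinite exactly
   when a_i^k determines k; an edge e with B_e <> 0 then carries infinite
   isotropy at its source back from its target, while an edge with B_e = 0
   kills every restriction.  Restricting a_i^k along a path mu yields an
   exponent of size about |k| |B_mu| / A_mu, and relabelling the edges of mu
   attains at least that much.  If the action is contracting, exponents at
   vertices of infinite isotropy are bounded, which forces |B_mu| < A_mu on
   E^n_{A,infty} for some n.  Conversely, that inequality makes large exponents
   drop by one every n steps along E_{A,infty}; every other path ends at a
   vertex of finite isotropy or kills the exponent, so finitely many elements
   form a nucleus.  Finally |B_mu| < A_mu <= Amax^n bounds the ratio by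
   1 - Amax^-n at length n, multiplicativity bounds the maximal ratio at
   length m by Bmax^n (1 - Amax^-n)^(m div n), whose m-th root has limsup < 1;
   and a limsup < 1 gives a maximal ratio < 1 at some length. *)

From mathcomp Require Import all_boot all_order all_algebra.
From mathcomp Require Import all_classical all_reals all_analysis.
From mathcomp Require Import zify ring lra.
Import Order.TTheory GRing.Theory Num.Theory.
Local Open Scope ring_scope.
Set Implicit Arguments. Unset Strict Implicit. Unset Printing Implicit Defensive.

Lemma absz_divz_addn_le (x : int) (m a : nat) : (m < a)%N ->
  (`|((x + m%:Z) %/ a%:Z)%Z| * a <= `|x| + a)%N.
Proof.
move=> lt_ma; have a_neq0 : a%:Z != 0 by rewrite eqz_nat; lia.
move: (divz_eq (x + m%:Z) a%:Z) (modz_ge0 (x + m%:Z) a_neq0).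
move: (ltz_mod (x + m%:Z) a_neq0).
set q := ((x + m%:Z) %/ a%:Z)%Z; set r := ((x + m%:Z) %% a%:Z)%Z.
nia.
Qed.

(* The remainder [m] rounds away from zero: [a - 1] if [x >= 0], else [0]. *)
Lemma exists_absz_divz_addn_ge (x : int) (a : nat) : (0 < a)%N ->
  exists2 m, (m < a)%N & (`|x| <= `|((x + m%:Z) %/ a%:Z)%Z| * a)%N.
Proof.
move=> a_gt0; have a_neq0 : a%:Z != 0 by rewrite eqz_nat; lia.
have key m : (0 <= x -> m = a.-1) -> (x < 0 -> m = 0%N) ->
    (`|x| <= `|((x + m%:Z) %/ a%:Z)%Z| * a)%N.
  move: (divz_eq (x + m%:Z) a%:Z) (modz_ge0 (x + m%:Z) a_neq0).
  move: (ltz_mod (x + m%:Z) a_neq0).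
  set q := ((x + m%:Z) %/ a%:Z)%Z; set r := ((x + m%:Z) %% a%:Z)%Z.
  nia.
have [x_ge0|x_lt0] := lerP 0 x.
  by exists a.-1; [lia | apply: key => //; rewrite ltNge x_ge0].
by exists 0%N => //; apply: key => // /(lt_le_trans x_lt0); rewrite ltxx.
Qed.

Lemma size_take_mul_divn (T : Type) (s : seq T) n :
  size (take (n * (size s %/ n)) s) = (n * (size s %/ n))%N.
Proof. by rewrite size_takel // mulnC leq_divM. Qed.

Lemma size_drop_mul_divn (T : Type) (s : seq T) n : (0 < n)%N ->
  (size (drop (n * (size s %/ n)) s) < n)%N.
Proof.
move=> n_gt0; have := divn_eq (size s) n; have := ltn_mod (size s) n.
by rewrite size_drop n_gt0; lia.
Qed.

Section LimsupRoot.
Local Open Scope classical_set_scope.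
Variable R : realType.
Implicit Types (u : (\bar R)^nat) (t l : \bar R).

Lemma limn_esup_lt u t l : (t < l)%E -> (\forall n \near \oo, u n <= t)%E ->
  (limn_esup u < l)%E.
Proof.
move=> lt_tl u_le; apply: le_lt_trans lt_tl.
apply: le_trans (ereal_inf_lbound _) _; first by exists [set n | u n <= t]%E.
by apply: ge_ereal_sup => _ [n /= ? <-].
Qed.

Lemma limn_esup_lt_near u l : (limn_esup u < l)%E -> \forall n \near \oo, (u n < l)%E.
Proof.
move=> /ereal_inf_lt[_ [V V_oo <-]] sup_lt; apply: filterS V_oo => n Vn.
by apply: le_lt_trans sup_lt; apply: ereal_sup_ubound; exists n.
Qed.

Lemma powR_invn_exprn (x : R) m : 0 <= x -> (0 < m)%N -> (x `^ m%:R^-1) ^+ m = x.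
Proof.
move=> x_ge0 m_gt0; rewrite -powR_mulrn ?powR_ge0 // -powRrM mulVf ?powRr1 //.
by rewrite pnatr_eq0 -lt0n.
Qed.

Lemma exprn_powR_invn (x : R) m : 0 <= x -> (0 < m)%N -> (x ^+ m) `^ m%:R^-1 = x.
Proof.
move=> x_ge0 m_gt0; rewrite -powR_mulrn // -powRrM mulfV ?powRr1 //.
by rewrite pnatr_eq0 -lt0n.
Qed.

(* With mu := rho^(1/n) < t < 1, one has rho^(m %/ n) <= mu^(m - n), and
   c (mu/t)^(m - n) <= t^n for large m since mu/t < 1. *)
Lemma geometric_floor_le_pow (c rho : R) n : (0 < n)%N -> 0 <= c -> 0 <= rho < 1 ->
  exists2 t : R, 0 <= t < 1 & \forall m \near \oo, c * rho ^+ (m %/ n) <= t ^+ m.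
Proof.
move=> n_gt0 c_ge0 /andP[rho_ge0 rho_lt1].
set mu := rho `^ n%:R^-1; have mu_ge0 : 0 <= mu := powR_ge0 _ _.
have muE : mu ^+ n = rho by rewrite powR_invn_exprn.
have mu_lt1 : mu < 1.
  apply: (@lt_le_trans _ _ (1 `^ n%:R^-1)); last by rewrite powR1.
  by rewrite gt0_ltr_powR ?invr_gt0 ?ltr0n ?nnegrE.
set t := (1 + mu) / 2.
have t_gt0 : 0 < t by rewrite /t; lra.
have mu_lt_t : mu < t by rewrite /t; lra.
exists t; first by rewrite ltW //= /t; lra.
have mut_lt1 : `|mu / t| < 1.
  rewrite ger0_norm; last by rewrite divr_ge0 // ltW.
  by rewrite ltr_pdivrMr // mul1r.
have [N _ small] := cvgr_lt _ (cvg_geometric c mut_lt1) _ (exprn_gt0 n t_gt0).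
near=> m; have m_ge : (N + n <= m)%N by near: m; apply: nbhs_infty_ge.
have rho_le : rho ^+ (m %/ n) <= mu ^+ (m - n).
  rewrite -muE -exprM; apply: ler_wiXn2l; rewrite ?mu_ge0 ?ltW //.
  by have := ltn_ceil m n_gt0; rewrite mulSn; lia.
apply: le_trans (ler_wpM2l c_ge0 rho_le) _.
have /ltW : geometric c (mu / t) (m - n)%N < t ^+ n by apply: small => /=; lia.
by rewrite /geometric /= expr_div_n mulrA ler_pdivrMr ?exprn_gt0 // -exprD subnKC //; lia.
Unshelve. all: by end_near.
Qed.

Lemma limn_esup_root_lt1 (v : R^nat) (c rho : R) n : (0 < n)%N -> 0 <= c ->
  0 <= rho < 1 -> (forall m, 0 <= v m <= c * rho ^+ (m %/ n)) ->
  (limn_esup (fun m => (v m `^ m%:R^-1)%:E) < 1%:E)%E.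
Proof.
move=> n_gt0 c_ge0 rho01 v_bound.
have [t /andP[t_ge0 t_lt1] v_le] := geometric_floor_le_pow n_gt0 c_ge0 rho01.
apply: (@limn_esup_lt _ t%:E); first by rewrite lte_fin.
near=> m; have m_gt0 : (0 < m)%N by near: m; apply: nbhs_infty_gt.
have /andP[v_ge0 v_le'] := v_bound m.
rewrite lee_fin -[X in _ <= X](exprn_powR_invn t_ge0 m_gt0).
apply: ge0_ler_powR; rewrite ?nnegrE ?invr_ge0 ?exprn_ge0 //.
by apply: le_trans v_le' _; near: m.
Unshelve. all: by end_near.
Qed.

Lemma limn_esup_root_lt1_exists (v : R^nat) : (forall m, 0 <= v m) ->
  (limn_esup (fun m => (v m `^ m%:R^-1)%:E) < 1%:E)%E -> exists2 m, (0 < m)%N & v m < 1.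
Proof.
move=> v_ge0 /limn_esup_lt_near[N _ root_lt1]; exists N.+1 => //.
move: (root_lt1 N.+1 (leqnSn N)); rewrite /= lte_fin; apply: contraTT; rewrite -!leNgt.
have inv_ge0 : 0 <= N.+1%:R^-1 :> R by rewrite invr_ge0.
move=> /(ge0_ler_powR inv_ge0).
by rewrite powR1 !nnegrE ler01 v_ge0; apply.
Qed.

End LimsupRoot.

Section Katsura.
Variables (N : nat) (A : 'M[nat]_N) (B : 'M[int]_N).
Implicit Types (i j : 'I_N) (p q : seq ('I_N * nat)) (k x y : int).

Lemma path_src_cat i p q : path_src i (p ++ q) = path_src (path_src i p) q.
Proof. by rewrite /path_src map_cat last_cat. Qed.

Lemma is_path_cat i p q :
  is_path A i (p ++ q) = is_path A i p && is_path A (path_src i p) q.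
Proof. by elim: p i => [|[j m] p IH] i //=; rewrite IH andbA. Qed.

Lemma act_cat k i p q :
  act A B k i (p ++ q) = act A B k i p ++ act A B (res A B k i p) (path_src i p) q.
Proof. by elim: p k i => [|[j m] p IH] k i //=; rewrite IH. Qed.

Lemma res_cat k i p q : res A B k i (p ++ q) = res A B (res A B k i p) (path_src i p) q.
Proof. by elim: p k i => [|[j m] p IH] k i //=; rewrite IH. Qed.

Lemma A_path_cat i p q :
  A_path A i (p ++ q) = (A_path A i p * A_path A (path_src i p) q)%N.
Proof. by elim: p i => [|[j m] p IH] i /=; rewrite ?mul1n // IH mulnA. Qed.

Lemma B_path_cat i p q :
  B_path B i (p ++ q) = B_path B i p * B_path B (path_src i p) q.
Proof. by elim: p i => [|[j m] p IH] i /=; rewrite ?mul1r // IH mulrA. Qed.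

Lemma A_path_gt0 i p : is_path A i p -> (0 < A_path A i p)%N.
Proof.
elim: p i => [|[j m] p IH] i //= /andP[lt_mA /IH].
by rewrite muln_gt0 (leq_ltn_trans _ lt_mA).
Qed.

Lemma act_path k i p : is_path A i p ->
  [/\ is_path A i (act A B k i p), path_src i (act A B k i p) = path_src i p
    & size (act A B k i p) = size p].
Proof.
elim: p k i => [|[j m] p IH] k i //= /andP[lt_mA p_path].
have A_neq0 : (A i j)%:Z != 0 by rewrite eqz_nat -lt0n (leq_ltn_trans _ lt_mA).
have [p'_path src_eq ->] := IH ((k * B i j + m%:Z) %/ (A i j)%:Z)%Z j p_path.
split=> //; rewrite p'_path andbT.
have := ltz_mod (k * B i j + m%:Z) A_neq0.
have := modz_ge0 (k * B i j + m%:Z) A_neq0; lia.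
Qed.

Lemma act_addz x k i p : is_path A i p ->
  act A B (x + k) i p = act A B x i (act A B k i p).
Proof.
elim: p x k i => [|[j m] p IH] x k i //= /andP[lt_mA p_path].
have A_neq0 : (A i j)%:Z != 0 by rewrite eqz_nat -lt0n (leq_ltn_trans _ lt_mA).
set y := k * B i j + m%:Z; set a := (A i j)%:Z.
have rE : `|(y %% a)%Z|%:Z = (y %% a)%Z by rewrite gez0_abs ?modz_ge0.
have splitE : (x + k) * B i j + m%:Z = (y %/ a)%Z * a + (x * B i j + (y %% a)%Z).
  by rewrite addrCA -divz_eq /y; ring.
by rewrite rE splitE modzMDl divzMDl // [(y %/ a)%Z + _]addrC IH.
Qed.

Lemma Gequiv_sym i x y : Gequiv A B i x y -> Gequiv A B i y x.
Proof. by move=> xy p p_path; rewrite xy. Qed.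

Lemma Gequiv_trans i x y z :
  Gequiv A B i x y -> Gequiv A B i y z -> Gequiv A B i x z.
Proof. by move=> xy yz p p_path; rewrite xy ?yz. Qed.

Lemma Gequiv_addr i k x y : Gequiv A B i x y -> Gequiv A B i (x + k) (y + k).
Proof.
move=> xy p p_path; have [kp_path _ _] := act_path k p_path.
by rewrite !act_addz // xy.
Qed.

Lemma Gequiv_subr i x y : Gequiv A B i x y <-> Gequiv A B i 0 (y - x).
Proof.
split=> [xy|/(Gequiv_addr x)]; last by rewrite add0r subrK.
by have := Gequiv_addr (- x) xy; rewrite subrr.
Qed.

Lemma Gequiv_res i x y p : Gequiv A B i x y -> is_path A i p ->
  Gequiv A B (path_src i p) (res A B x i p) (res A B y i p).
Proof.
move=> xy p_path q q_path.
have /xy : is_path A i (p ++ q) by rewrite is_path_cat p_path.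
have [_ _ sx] := act_path x p_path; have [_ _ sy] := act_path y p_path.
by rewrite !act_cat => /eqP; rewrite eqseq_cat ?sx ?sy // => /andP[_ /eqP].
Qed.

Lemma Gequiv0_mulz i d z : Gequiv A B i 0 d -> Gequiv A B i 0 (z * d).
Proof.
move=> d0; have nat_mul n : Gequiv A B i 0 (n%:Z * d).
  elim: n => [|n IH]; first by rewrite mul0r.
  apply: Gequiv_trans d0 _; have := Gequiv_addr d IH.
  by rewrite add0r -addn1 PoszD mulrDl mul1r.
case: z => n; first exact: nat_mul.
apply/Gequiv_sym; have := Gequiv_addr (- (n.+1%:Z * d)) (nat_mul n.+1).
by rewrite add0r subrr NegzE mulNr.
Qed.

Lemma isotropy_infiniteP i :
  isotropy_infinite A B i <-> forall d, Gequiv A B i 0 d -> d = 0.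
Proof.
split=> [i_inf d d0|i_faithful L]; last first.
  exists (\max_(l <- L) `|l|)%N.+1%:Z => l l_in_L /Gequiv_subr/i_faithful/eqP.
  rewrite subr_eq0 => /eqP l_eq.
  have := @leq_bigmax_seq _ L xpredT absz l l_in_L isT.
  by rewrite l_eq absz_nat ltnn.
have [//|d_neq0] := eqVneq d 0; exfalso.
have [k k_new] := i_inf [seq n%:Z | n <- iota 0 `|d|].
apply: (k_new (k %% d)%Z).
  apply/mapP; exists `|(k %% d)%Z|%N; last by rewrite gez0_abs // modz_ge0.
  by rewrite mem_iota /=; have := ltz_mod k d_neq0; have := modz_ge0 k d_neq0; lia.
have := Gequiv_addr (k %% d)%Z (Gequiv0_mulz (k %/ d)%Z d0).
by rewrite add0r -divz_eq; apply: Gequiv_sym.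
Qed.

Lemma res0 i p : is_path A i p -> res A B 0 i p = 0.
Proof.
elim: p i => [|[j m] p IH] i //= /andP[lt_mA /IH res_p0].
by rewrite mul0r add0r divz_small.
Qed.

Lemma is_inf_path_path i p : is_inf_path A B i p -> is_path A i p.
Proof. by elim: p i => [|[j m] p IH] i //= [-> _ _ /IH]. Qed.

Lemma is_inf_path_cat i p q : is_inf_path A B i (p ++ q) ->
  is_inf_path A B i p /\ is_inf_path A B (path_src i p) q.
Proof. by elim: p i => [|[j m] p IH] i //= [? ? ? /IH[]]. Qed.

Lemma is_inf_path_src i p : is_inf_path A B i p -> (0 < size p)%N ->
  isotropy_infinite A B (path_src i p).
Proof.
elim: p i => [|[j m] [|e p] IH] i //= [_ j_inf _ p_inf] _ //.
by have := IH j p_inf isT; rewrite /path_src.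
Qed.

Hypothesis KP : Katsura_pair A B.

Lemma isotropy_infinite_edge i j : B i j != 0 ->
  isotropy_infinite A B j -> isotropy_infinite A B i.
Proof.
move=> Bij_neq0 /isotropy_infiniteP j_faithful; apply/isotropy_infiniteP => d d0.
have Aij_gt0 : (0 < A i j)%N by rewrite lt0n; apply: contra_neq Bij_neq0 => /KP.
have Aij_neq0 : (A i j)%:Z != 0 by rewrite eqz_nat -lt0n.
have edge_path : is_path A i [:: (j, 0%N)] by rewrite /= Aij_gt0.
have := Gequiv_res (Gequiv0_mulz (A i j)%:Z d0) edge_path.
rewrite /= !addr0 mul0r div0z -mulrA mulKz // => /j_faithful/eqP.
by rewrite mulf_eq0 (negbTE Bij_neq0) orbF => /eqP.
Qed.

Lemma res_edge_B0 k i j m p : B i j = 0 -> (m < A i j)%N -> is_path A j p ->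
  res A B k i ((j, m) :: p) = 0.
Proof. by move=> Bij0 lt_mA /res0 /= res_p0; rewrite Bij0 mulr0 add0r divz_small. Qed.

Lemma finite_isotropy_res k i p : ~ isotropy_infinite A B i -> is_path A i p ->
  res A B k i p = 0 \/ ~ isotropy_infinite A B (path_src i p).
Proof.
elim: p k i => [|[j m] p IH] k i i_fin /=; first by right.
move=> /andP[lt_mA p_path].
have [Bij0|Bij_neq0] := eqVneq (B i j) 0.
  by left; have := res_edge_B0 k Bij0 lt_mA p_path.
by apply: IH => // /(isotropy_infinite_edge Bij_neq0).
Qed.

Lemma path_trichotomy k i p : is_path A i p ->
  [\/ is_inf_path A B i p, res A B k i p = 0
    | ~ isotropy_infinite A B (path_src i p)].
Proof.
elim: p k i => [|[j m] p IH] k i /=; first by constructor.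
move=> /andP[lt_mA p_path].
have [Bij0|Bij_neq0] := eqVneq (B i j) 0.
  by apply: Or32; have := res_edge_B0 k Bij0 lt_mA p_path.
set k1 := ((k * B i j + m%:Z) %/ (A i j)%:Z)%Z.
have [j_inf|j_fin] := pselect (isotropy_infinite A B j).
  by have [p_inf|res0|src_fin] := IH k1 j p_path; [apply: Or31|apply: Or32|apply: Or33].
by have [res0|src_fin] := finite_isotropy_res k1 j_fin p_path; [apply: Or32|apply: Or33].
Qed.

(* The successors keep [Bmax ^ n] and [Amax ^ n] positive. *)
Definition Bmax := (\max_(ij : 'I_N * 'I_N) `|B ij.1 ij.2|).+1.
Definition Amax := (\max_(ij : 'I_N * 'I_N) A ij.1 ij.2).+1.

Lemma B_path_le i p : (`|B_path B i p| <= Bmax ^ size p)%N.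
Proof.
elim: p i => [|[j m] p IH] i //=; rewrite abszM expnS leq_mul //.
exact: leqW (@leq_bigmax _ (fun ij : 'I_N * 'I_N => `|B ij.1 ij.2|%N) (i, j)).
Qed.

Lemma A_path_le i p : (A_path A i p <= Amax ^ size p)%N.
Proof.
elim: p i => [|[j m] p IH] i //=; rewrite expnS leq_mul //.
exact: leqW (@leq_bigmax _ (fun ij : 'I_N * 'I_N => A ij.1 ij.2) (i, j)).
Qed.

Lemma res_path_le k i p : is_path A i p ->
  (`|res A B k i p| * A_path A i p <=
     `|k| * `|B_path B i p| + A_path A i p * (size p * Bmax ^ size p))%N.
Proof.
elim: p k i => [|[j m] p IH] k i /=; first by rewrite !muln1 leq_addr.
move=> /andP[lt_mA p_path].
set k1 := ((k * B i j + m%:Z) %/ (A i j)%:Z)%Z.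
have step : (`|k1| * A i j <= `|k| * `|B i j| + A i j)%N.
  by rewrite -abszM; apply: absz_divz_addn_le.
have := IH k1 j p_path; rewrite abszM expnS.
have b_le := B_path_le j p; have a_gt0 := A_path_gt0 p_path.
set r := `|res _ _ _ _ _|%N; set a0 := A i j; set a := A_path A j p.
set b := `|B_path B j p|%N; set s := size p; set X := (Bmax ^ s)%N => IHr.
have e0 : (r * (a0 * a) <= a0 * (`|k1| * b) + a0 * a * (s * X))%N.
  by rewrite mulnCA -mulnA -mulnDr leq_mul2l IHr orbT.
have e1 : (a0 * (`|k1| * b) <= (`|k| * `|B i j| + a0) * b)%N.
  by rewrite mulnA leq_mul2r [(a0 * _)%N]mulnC step orbT.
have e2 : (a0 * b <= a0 * a * X)%N.
  by rewrite -mulnA leq_mul2l (leq_trans b_le) ?orbT // leq_pmull.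
have e3 : (a0 * a * (s.+1 * X) <= a0 * a * (s.+1 * (Bmax * X)))%N.
  by rewrite !leq_mul2l leq_pmull ?orbT.
lia.
Qed.

Lemma exists_res_path_ge k i p : is_path A i p ->
  exists p', [/\ is_path A i p', path_src i p' = path_src i p, size p' = size p
    & (`|k| * `|B_path B i p| <= `|res A B k i p'| * A_path A i p)%N].
Proof.
elim: p k i => [|[j m] p IH] k i /=; first by exists [::]; rewrite !muln1.
move=> /andP[lt_mA p_path].
have [m' lt_m'A step] := exists_absz_divz_addn_ge (k * B i j) (leq_ltn_trans (leq0n m) lt_mA).
set k1 := ((k * B i j + m'%:Z) %/ (A i j)%:Z)%Z in step.
have [p' [p'_path src_eq size_eq le_res]] := IH k1 j p_path.
exists ((j, m') :: p'); split=> /=; rewrite ?lt_m'A ?size_eq //.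
rewrite abszM mulnA -abszM (leq_trans (leq_mul step (leqnn _))) //.
by rewrite mulnAC mulnCA [X in (X <= _)%N]mulnC leq_mul2l le_res orbT.
Qed.

Definition inf_paths_ratio_lt1 (n : nat) : Prop :=
  forall i p, is_inf_path A B i p -> size p = n -> (`|B_path B i p| < A_path A i p)%N.

Lemma contracting_ratio_lt1 :
  contracting A B -> exists2 n, (0 < n)%N & inf_paths_ratio_lt1 n.
Proof.
move=> [F F_nucleus].
set M := (\max_(f <- F) `|f.2|)%N.
have [len len_spec] := boolp.choice (fun i => F_nucleus i M.+1%:Z).
exists (\max_i len i).+1 => // i p p_inf size_p; rewrite ltnNge; apply/negP => A_le_B.
have [p' [p'_path src_eq size_eq le_res]] := exists_res_path_ge M.+1 (is_inf_path_path p_inf).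
have [|f f_in_F [f_src res_f]] := len_spec i p' p'_path.
  by rewrite size_eq size_p leqW // (leq_bigmax i).
have /isotropy_infiniteP src_faithful : isotropy_infinite A B f.1.
  by rewrite f_src src_eq; apply: (is_inf_path_src p_inf); rewrite size_p.
have /Gequiv_subr/src_faithful/eqP := res_f; rewrite subr_eq0 => /eqP res_eq.
have res_le_M : (`|res A B M.+1%:Z i p'| <= M)%N.
  by rewrite -res_eq (@leq_bigmax_seq _ F xpredT (fun f => `|f.2|%N)).
have := leq_trans (leq_mul (leqnn M.+1) A_le_B) le_res.
rewrite leq_pmul2r ?A_path_gt0 ?(is_inf_path_path p_inf) //.
by move=> /leq_trans/(_ res_le_M); rewrite ltnn.
Qed.

Lemma finite_isotropy_reps : exists reps : 'I_N -> seq int, forall j,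
  ~ isotropy_infinite A B j -> forall k, exists2 l, l \in reps j & Gequiv A B j k l.
Proof.
have reps j : exists L : seq int, ~ isotropy_infinite A B j ->
    forall k, exists2 l, l \in L & Gequiv A B j k l.
  have [j_inf|/existsNP[L /forallNP L_reps]] := pselect (isotropy_infinite A B j).
    by exists [::].
  exists L => _ k; have /existsNP[l /not_implyP[l_in /contrapT]] := L_reps k.
  by exists l.
by have [reps_of reps_spec] := boolp.choice reps; exists reps_of.
Qed.

Section Nucleus.
Variables (n : nat) (n_gt0 : (0 < n)%N) (ratio_lt1 : inf_paths_ratio_lt1 n).

Let drift := (n * Bmax ^ n)%N.
Let radius := (Amax ^ n * drift)%N.

Lemma res_short_path_le k i p : is_path A i p -> (size p <= n)%N ->
  (`|res A B k i p| <= `|k| * Bmax ^ n + drift)%N.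
Proof.
move=> p_path size_le; have := res_path_le k p_path.
have a_gt0 := A_path_gt0 p_path; have b_le := B_path_le i p.
have X_le : (Bmax ^ size p <= Bmax ^ n)%N by rewrite leq_pexp2l.
have Y_le : (size p * Bmax ^ size p <= drift)%N by rewrite leq_mul.
set r := `|res _ _ _ _ _|%N; set a := A_path A i p; set b := `|B_path B i p|%N => le_r.
have e1 : (`|k| * b <= `|k| * Bmax ^ n * a)%N.
  by rewrite -mulnA leq_mul2l (leq_trans b_le) ?orbT // (leq_trans X_le) ?leq_pmulr.
have e2 : (a * (size p * Bmax ^ size p) <= drift * a)%N.
  by rewrite mulnC leq_mul2r Y_le orbT.
by rewrite -(leq_pmul2r a_gt0) mulnDl (leq_trans le_r) // leq_add.
Qed.

Lemma res_chunk_le k i p : is_inf_path A B i p -> size p = n ->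
  (`|res A B k i p| <= maxn `|k|.-1 radius)%N.
Proof.
move=> p_inf size_p; have p_path := is_inf_path_path p_inf.
have := res_path_le k p_path; rewrite size_p -/drift.
have b_lt := ratio_lt1 p_inf size_p.
have a_drift : (A_path A i p * drift <= radius)%N.
  by rewrite leq_mul2r -size_p A_path_le orbT.
rewrite -(prednK (A_path_gt0 p_path)) in b_lt a_drift *.
set r := `|res _ _ _ _ _|%N; set a := (A_path A i p).-1; set b := `|B_path B i p|%N.
set kk := `|k|%N => le_r.
have kk_b : (kk * b <= kk * a)%N by rewrite leq_mul2l -ltnS b_lt orbT.
rewrite leq_max; apply/orP; case: (leqP kk radius) => [kk_le|kk_gt].
  right; rewrite -(leq_pmul2r (ltn0Sn a)); have := leq_mul kk_le (leqnn a); nia.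
have kk_gt0 : (0 < kk)%N by apply: leq_ltn_trans kk_gt.
left; rewrite -ltnS prednK // -(ltn_pmul2r (ltn0Sn a)); nia.
Qed.

Lemma res_chunks_le r k i p : is_inf_path A B i p -> size p = (n * r)%N ->
  (`|res A B k i p| <= maxn (`|k| - r) radius)%N.
Proof.
elim: r k i p => [|r IH] k i p p_inf size_p.
  by move: size_p; rewrite muln0 => /size0nil ->; rewrite subn0 leq_maxl.
rewrite -(cat_take_drop n p) in p_inf *; have [c_inf p'_inf] := is_inf_path_cat p_inf.
have size_c : size (take n p) = n by rewrite size_takel // size_p leq_pmulr.
have := res_chunk_le k c_inf size_c.
rewrite res_cat; move: (res A B k i _) => k' k'_le.
apply: leq_trans (IH k' _ _ p'_inf _) _; first by rewrite size_drop size_p mulnS; lia.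
lia.
Qed.

Let nucleus_radius := (radius * Bmax ^ n + drift)%N.

Lemma res_inf_path_le k i p : is_inf_path A B i p -> (n * `|k| <= size p)%N ->
  (`|res A B k i p| <= nucleus_radius)%N.
Proof.
move=> p_inf size_ge; set r := (size p %/ n)%N.
have size_c := size_take_mul_divn p n; have size_p' := size_drop_mul_divn p n_gt0.
rewrite -(cat_take_drop (n * r) p) in p_inf *; have [c_inf p'_inf] := is_inf_path_cat p_inf.
have res_c_le : (`|res A B k i (take (n * r) p)| <= radius)%N.
  have := res_chunks_le k c_inf size_c.
  by rewrite (_ : `|k| - r = 0)%N ?max0n //; apply/eqP; rewrite subn_eq0 leq_divRL // mulnC.
rewrite res_cat (leq_trans (res_short_path_le _ (is_inf_path_path p'_inf) (ltnW size_p'))) //.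
by rewrite leq_add2r leq_mul2r res_c_le orbT.
Qed.

Lemma ratio_lt1_contracting : contracting A B.
Proof.
have [reps reps_spec] := finite_isotropy_reps.
set rad := nucleus_radius.
set ball := [seq m%:Z - rad%:Z | m <- iota 0 rad.*2.+1].
have ball_spec l : (`|l| <= rad)%N -> l \in ball.
  by move=> l_le; apply/mapP; exists (absz (l + rad%:Z)); [rewrite mem_iota|]; lia.
set F := [seq (j, l) | j <- enum 'I_N, l <- ball ++ reps j].
have in_F j l : (l \in ball) || (l \in reps j) -> (j, l) \in F.
  by move=> l_in; apply/flatten_mapP; exists j; rewrite ?mem_enum // map_f // mem_cat.
exists F => i k; exists (n * `|k|)%N => p p_path size_ge.
have [p_inf|res0|src_fin] := path_trichotomy k p_path.
- exists (path_src i p, res A B k i p) => //.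
  by rewrite in_F // ball_spec // res_inf_path_le.
- by exists (path_src i p, 0); rewrite ?res0 // in_F // ball_spec.
- have [l l_in equiv] := reps_spec _ src_fin (res A B k i p).
  by exists (path_src i p, l); rewrite // in_F // l_in orbT.
Qed.

End Nucleus.
End Katsura.

Section MaxRatio.
Variables (R : realType) (N : nat) (A : 'M[nat]_N) (B : 'M[int]_N).
Implicit Types (i : 'I_N) (p q : seq ('I_N * nat)).

Definition path_ratio i p : R := `|B_path B i p|%:~R / (A_path A i p)%:R.

Lemma path_ratio_ge0 i p : 0 <= path_ratio i p.
Proof. by rewrite divr_ge0 // ler0z. Qed.

Lemma path_ratio_cat i p q :
  path_ratio i (p ++ q) = path_ratio i p * path_ratio (path_src i p) q.
Proof. by rewrite /path_ratio A_path_cat B_path_cat normrM intrM natrM mulf_div. Qed.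

Lemma path_ratio_le i p : is_path A i p -> path_ratio i p <= (Bmax B ^ size p)%:R.
Proof.
move=> p_path; have A_gt0 := A_path_gt0 p_path.
rewrite /path_ratio -natr_absz ler_pdivrMr ?ltr0n // -natrM ler_nat.
by rewrite (leq_trans (B_path_le _ _ _)) // leq_pmulr.
Qed.

Definition ratios n : set R :=
  [set r | exists i p, [/\ size p = n, is_inf_path A B i p & r = path_ratio i p]].

Lemma max_ratioE n : max_ratio A B R n = sup (ratios n).
Proof. by []. Qed.

Lemma has_ubound_ratios n : has_ubound (ratios n).
Proof.
exists (Bmax B ^ n)%:R => _ [i [p [<- p_inf ->]]].
exact: path_ratio_le (is_inf_path_path p_inf).
Qed.

Lemma path_ratio_le_max_ratio i p : is_inf_path A B i p ->
  path_ratio i p <= max_ratio A B R (size p).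
Proof.
by move=> p_inf; rewrite max_ratioE; apply: (ub_le_sup (has_ubound_ratios _)); exists i, p.
Qed.

Lemma max_ratio_ge0 n : 0 <= max_ratio A B R n.
Proof.
rewrite max_ratioE; have [->|/set0P[r ratio_r]] := eqVneq (ratios n) set0.
  by rewrite sup0.
have [i [p [_ _ r_eq]]] := ratio_r.
by rewrite (le_trans _ (ub_le_sup (has_ubound_ratios n) ratio_r)) // r_eq path_ratio_ge0.
Qed.

Lemma max_ratio_le n c : 0 <= c ->
  (forall i p, is_inf_path A B i p -> size p = n -> path_ratio i p <= c) ->
  max_ratio A B R n <= c.
Proof.
move=> c_ge0 le_c; rewrite max_ratioE.
have [->|/set0P ratios_neq0] := eqVneq (ratios n) set0; first by rewrite sup0.
by apply: ge_sup ratios_neq0 _ => _ [i [p [size_p p_inf ->]]]; apply: le_c.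
Qed.

Lemma max_ratio_lt1 n : max_ratio A B R n < 1 -> inf_paths_ratio_lt1 A B n.
Proof.
move=> lt1 i p p_inf size_p; have A_gt0 := A_path_gt0 (is_inf_path_path p_inf).
rewrite -size_p in lt1; have := le_lt_trans (path_ratio_le_max_ratio p_inf) lt1.
by rewrite /path_ratio ltr_pdivrMr ?ltr0n // mul1r -natr_absz ltr_nat.
Qed.

Section Geometric.
Variables (n : nat) (n_gt0 : (0 < n)%N) (ratio_lt1 : inf_paths_ratio_lt1 A B n).

(* [A_mu <= Amax^n] turns [|B_mu| <= A_mu - 1] into a uniform gap below 1. *)
Let rho : R := 1 - ((Amax A ^ n)%:R)^-1.

Let Amax_ge1 : 1 <= (Amax A ^ n)%:R :> R.
Proof. by rewrite ler1n expn_gt0. Qed.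

Let rho_ge0 : 0 <= rho.
Proof. by rewrite subr_ge0 invf_le1 // (lt_le_trans ltr01). Qed.

Lemma path_ratio_chunk_le i p : is_inf_path A B i p -> size p = n -> path_ratio i p <= rho.
Proof.
move=> p_inf size_p; have := ratio_lt1 p_inf size_p.
have := A_path_le A i p; have := A_path_gt0 (is_inf_path_path p_inf).
rewrite /path_ratio /rho size_p -natr_absz.
move: (A_path A i p) `|B_path B i p|%N => a b a_gt0 a_le b_lt.
have b_le : b%:R <= a%:R - 1 :> R by rewrite lerBrDr natr1 ler_nat.
rewrite ler_pdivrMr ?ltr0n // mulrBl mul1r (le_trans b_le) // lerD2l lerN2.
by rewrite ler_pdivrMl ?mulr1 ?ler_nat // (lt_le_trans ltr01).
Qed.

Lemma path_ratio_chunks_le r i p : is_inf_path A B i p -> size p = (n * r)%N ->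
  path_ratio i p <= rho ^+ r.
Proof.
elim: r i p => [|r IH] i p p_inf size_p.
  by move: size_p; rewrite muln0 => /size0nil ->; rewrite /path_ratio /= normr1 divr1.
rewrite -(cat_take_drop n p) in p_inf *; have [c_inf p'_inf] := is_inf_path_cat p_inf.
rewrite path_ratio_cat exprS ler_pM ?path_ratio_ge0 //.
  by apply: path_ratio_chunk_le c_inf _; rewrite size_takel // size_p leq_pmulr.
by apply: IH p'_inf _; rewrite size_drop size_p mulnS addKn.
Qed.

Lemma max_ratio_le_geometric m : max_ratio A B R m <= (Bmax B ^ n)%:R * rho ^+ (m %/ n).
Proof.
apply: max_ratio_le => [|i p p_inf size_p]; first by rewrite mulr_ge0 // exprn_ge0.
have size_c := size_take_mul_divn p n; have size_p' := size_drop_mul_divn p n_gt0.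
rewrite -(cat_take_drop (n * (size p %/ n)) p) in p_inf *.
have [c_inf p'_inf] := is_inf_path_cat p_inf.
rewrite path_ratio_cat [X in _ <= X]mulrC -size_p ler_pM ?path_ratio_ge0 //.
  exact: path_ratio_chunks_le.
apply: le_trans (path_ratio_le (is_inf_path_path p'_inf)) _.
by rewrite ler_nat leq_pexp2l // ltnW.
Qed.

Lemma ratio_lt1_limn_esup_root :
  (limn_esup (fun m => (max_ratio A B R m `^ m%:R^-1)%:E) < 1%:E)%E.
Proof.
have rho_lt1 : rho < 1 by rewrite ltrBlDr ltrDl invr_gt0 (lt_le_trans ltr01).
apply: (@limn_esup_root_lt1 _ _ (Bmax B ^ n)%:R rho _ n_gt0) => [||m].
- exact: ler0n.
- by rewrite rho_ge0 rho_lt1.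
- by rewrite max_ratio_ge0 max_ratio_le_geometric.
Qed.

End Geometric.
End MaxRatio.

Unset Implicit Arguments. Set Strict Implicit.

Theorem corollary3p2 (R : realType) (N : nat) (A : 'M[nat]_N) (B : 'M[int]_N) :
  Katsura_pair A B ->
  (contracting A B <->
   (limn_esup (fun n : nat => ((max_ratio A B R n) `^ (n%:R^-1))%:E)
      < 1%:E)%E).
Proof.
move=> KP; split.
  by move=> /contracting_ratio_lt1[n n_gt0 /(ratio_lt1_limn_esup_root R n_gt0)].
move=> /limn_esup_root_lt1_exists[m|n n_gt0 /max_ratio_lt1]; first exact: max_ratio_ge0.
exact: ratio_lt1_contracting.
Qed.
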